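(* Let $R,\mu$ be positive integers with $\mu<R$. (i) For all elements $\lambda$ of an orbit under $G_{R,\mu}$, the values $\mathrm P^+_{R,\mu}(\lambda)$ are identical; the same holds for any orbit under $G^\oplus_{R,\mu}$. (ii) If $\mathbb Z_R$ is a single orbit under $G_{R,\mu}$, then $\mathrm P^+_{R,\mu}(\lambda)=\frac1\mu\binom{R-1}{\mu-1}$ for all $\lambda\in\mathbb Z_R$.
   Context: $\mathbb Z_R$ is the ring of integers modulo $R$, $\mathbb Z_R^*$ its group of units. $\mathrm P^+_{R,\mu}(\lambda)$ is the number of $\mu$-element subsets of $\mathbb Z_R$ whose elements sum to $\lambda$ in $\mathbb Z_R$. $G_{R,\mu}$ is the group of maps $\lambda\mapsto\lambda\ell+u\mu$ on $\mathbb Z_R$ with $\ell\in\mathbb Z_R^*$, $u\in\{0,\dots,R-1\}$; $G^\oplus_{R,\mu}$ is its subgroup with $\ell=1$. An orbit is an equivalence class of $\mathbb Z_R$ under ''$\lambda_2=\lambda_1\varphi$ for some $\varphi$ in the group''. *)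

From mathcomp Require Import all_boot all_algebra.
Set Implicit Arguments. Unset Strict Implicit. Unset Printing Implicit Defensive.
Import GRing.Theory.
Local Open Scope ring_scope.

(* Z_R is modelled by 'Z_R; this is faithful since we always assume 1 < R. *)

Definition Pplus (R mu : nat) (lam : 'Z_R) : nat :=
  #|[set S : {set 'Z_R} | (#|S| == mu)%N && (\sum_(x in S) x == lam)]|.

Definition Gmap (R mu : nat) (l : 'Z_R) (u : nat) (lam : 'Z_R) : 'Z_R :=
  lam * l + u%:R * mu%:R.

Definition in_G (R mu : nat) (phi : 'Z_R -> 'Z_R) : Prop :=
  exists l : 'Z_R, exists u : nat,
    l \is a GRing.unit /\ (u < R)%N /\ phi =1 Gmap mu l u.

Definition in_Gplus (R mu : nat) (phi : 'Z_R -> 'Z_R) : Prop :=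
  exists u : nat, (u < R)%N /\ phi =1 Gmap mu 1 u.

Definition same_orbit (R : nat) (inGrp : ('Z_R -> 'Z_R) -> Prop) (l1 l2 : 'Z_R) : Prop :=
  exists phi, inGrp phi /\ l2 = phi l1.

From mathcomp Require Import all_boot all_algebra.
Set Implicit Arguments. Unset Strict Implicit. Unset Printing Implicit Defensive.
Import GRing.Theory.
Local Open Scope ring_scope.

(* An affine bijection x |-> x l + c of Z_R maps the mu-subsets summing to
   lam onto the mu-subsets summing to lam l + c mu, and every element of
   G_{R,mu} is such a map; hence P^+ is constant on orbits.  If Z_R is a
   single orbit, the R values of P^+ are equal and add up to C(R, mu), so
   each is C(R, mu) / R = C(R-1, mu-1) / mu. *)

Section AffineInvariance.

Variables (R mu : nat) (l c : 'Z_R).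
Hypothesis l_unit : l \is a GRing.unit.

Let f (x : 'Z_R) := x * l + c.

Let f_inj : injective f.
Proof. by move=> x y /addIr /(mulIr l_unit). Qed.

Lemma sum_affine_imset (S : {set 'Z_R}) :
  \sum_(x in f @: S) x = (\sum_(x in S) x) * l + c *+ #|S|.
Proof.
rewrite big_imset /=; last by move=> x y _ _ /f_inj.
by rewrite big_split /= -mulr_suml sumr_const.
Qed.

Lemma Pplus_le_affine (lam : 'Z_R) :
  (Pplus mu lam <= Pplus mu (lam * l + c * mu%:R)%R)%N.
Proof.
rewrite /Pplus -(card_imset _ (imset_inj f_inj)).
apply: subset_leq_card; apply/subsetP => T /imsetP [S].
rewrite inE => /andP [/eqP cardS /eqP sumS] ->.
by rewrite inE card_imset // cardS eqxx sum_affine_imset sumS cardS mulr_natr eqxx.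
Qed.

End AffineInvariance.

Lemma Pplus_affine (R mu : nat) (lam l c : 'Z_R) : l \is a GRing.unit ->
  Pplus mu (lam * l + c * mu%:R) = Pplus mu lam.
Proof.
move=> l_unit; apply/eqP; rewrite eqn_leq Pplus_le_affine // andbT.
have inverse_map : (lam * l + c * mu%:R) * l^-1 + (- (c / l)) * mu%:R = lam.
  by rewrite mulrDl mulrK // mulNr mulrAC addrK.
by rewrite -{2}inverse_map Pplus_le_affine ?unitrV.
Qed.

Lemma Pplus_Gmap (R mu : nat) (l : 'Z_R) (u : nat) (lam : 'Z_R) :
  l \is a GRing.unit -> Pplus mu (Gmap mu l u lam) = Pplus mu lam.
Proof. exact: Pplus_affine. Qed.

Lemma Pplus_same_orbit_G (R mu : nat) (l1 l2 : 'Z_R) :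
  same_orbit (@in_G R mu) l1 l2 -> Pplus mu l1 = Pplus mu l2.
Proof. by move=> [phi [[l [u [l_unit [_ ->]]]] ->]]; rewrite Pplus_Gmap. Qed.

Lemma Pplus_same_orbit_Gplus (R mu : nat) (l1 l2 : 'Z_R) :
  same_orbit (@in_Gplus R mu) l1 l2 -> Pplus mu l1 = Pplus mu l2.
Proof. by move=> [phi [[u [_ ->]] ->]]; rewrite Pplus_Gmap ?unitr1. Qed.

Lemma sum_Pplus (R mu : nat) : (1 < R)%N ->
  (\sum_(lam : 'Z_R) Pplus mu lam)%N = 'C(R, mu).
Proof.
move=> R_gt1; have -> : 'C(R, mu) = 'C(#|'Z_R|, mu) by rewrite card_ord Zp_cast.
rewrite -card_draws cardE -sum1_size big_enum /=.
rewrite (partition_big (fun S : {set 'Z_R} => \sum_(x in S) x) xpredT) //=.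
apply: eq_bigr => lam _; rewrite /Pplus cardE -sum1_size big_enum.
by apply: eq_bigl => S; rewrite !inE.
Qed.

Lemma mul_Pplus_const (R mu : nat) (lam : 'Z_R) :
  (0 < mu < R)%N -> (forall x : 'Z_R, Pplus mu x = Pplus mu lam) ->
  (mu * Pplus mu lam)%N = 'C(R.-1, mu.-1).
Proof.
case/andP=> mu_gt0 mu_ltR Pconst; have R_gt1 := leq_ltn_trans mu_gt0 mu_ltR.
have sum_const : (R * Pplus mu lam)%N = 'C(R, mu).
  rewrite -sum_Pplus // (eq_bigr _ (fun x _ => Pconst x)).
  by rewrite sum_nat_const card_ord Zp_cast // mulnC.
apply/eqP; rewrite -(eqn_pmul2l (ltnW R_gt1)) mul_bin_diag prednK //.
by rewrite -sum_const mulnCA.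
Qed.

Theorem theorem4p6 (R mu : nat) (hmu : (0 < mu)%N) (hmuR : (mu < R)%N) :
  (* (i) *)
  (forall l1 l2 : 'Z_R, same_orbit (@in_G R mu) l1 l2 -> Pplus mu l1 = Pplus mu l2) /\
  (forall l1 l2 : 'Z_R, same_orbit (@in_Gplus R mu) l1 l2 -> Pplus mu l1 = Pplus mu l2) /\
  (* (ii) *)
  ((forall l1 l2 : 'Z_R, same_orbit (@in_G R mu) l1 l2) ->
   forall lam : 'Z_R,
     ((Pplus mu lam)%:R : rat) = (mu%:R)^-1 * ('C(R.-1, mu.-1))%:R).
Proof.
split; first exact: Pplus_same_orbit_G.
split; first exact: Pplus_same_orbit_Gplus.
move=> transitive lam.
have Pconst x : Pplus mu x = Pplus mu lam := Pplus_same_orbit_G (transitive x lam).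
rewrite -(mul_Pplus_const (lam := lam)) ?hmu ?hmuR // natrM mulKf //.
by rewrite Num.Theory.pnatr_eq0 -lt0n.
Qed.
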